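(* Under the unregularized objective (the regularized minimax objective induced by $\mathfrak R(h,a,\delta)=\mathcal R(h,a)$), the PuB-AMG subgame perfect equilibrium is not in general continuous: there exists a finite-horizon two-player zero-sum sequential game such that no subgame perfect equilibrium of its PuB-AMG, viewed as a map from public belief states to public decision rules, is continuous.
   Context: A finite-horizon two-player zero-sum sequential game consists of: players $i\in\{0,1\}$; a finite action set $\mathbb{A}$; a set of histories $\mathbb{H}$, at each of which exactly one player $\iota$ acts; each history $h$ determines each player's action-observation history (AOH) $h_i$ (perfect recall) and a public history $h_{\text{pub}}$ (sequence of common-knowledge public observations); an initial history distribution $\mu$; a reward $\mathcal{R}:\mathbb{H}\times\mathbb{A}\to\mathbb{R}$ (player 0 gets $\mathcal R$, player 1 gets $-\mathcal R$); a transition function $\mathcal{T}:\mathbb{H}\times\mathbb{A}\to\Delta(\mathbb{H})$; a horizon $T$. $\mathbb{H}(h_{\text{pub}})$, $\mathbb{H}_i(h_{\text{pub}})$ denote histories/AOHs consistent with $h_{\text{pub}}$; $h_\iota$ is the acting player's AOH at $h$. The PuB-AMG of the game: states (public belief states, PBSs) are $\tilde s\in\Delta(\mathbb{H}(h_{\text{pub}}))$ for public histories $h_{\text{pub}}$; at $\tilde s$ the acting player chooses a public decision rule $\tilde a:\mathbb{H}_\iota(h_{\text{pub}})\to\Delta(\mathbb{A})$; the next PBS arises by sampling $H\sim\tilde s$, $A\sim\tilde a(H_\iota)$, a next history from $\mathcal T(H,A)$, observing its public observation $o$, and taking the posterior over next histories given $\tilde s,\tilde a,o$. Under the unregularized objective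 the stage reward is $\tilde{\mathcal R}(\tilde s,\tilde a)=\mathbb{E}_{H\sim\tilde s}\mathbb{E}_{A\sim\tilde a(H_\iota)}\mathcal R(H,A)$; player 0 maximizes and player 1 minimizes the expected sum of stage rewards. A PuB-AMG policy maps PBSs to decision rules, and a subgame perfect equilibrium is a joint PuB-AMG policy whose restriction to the PuB-AMG started from any PBS is an equilibrium (saddle point) there. *)

From HB Require Import structures.
From mathcomp Require Import all_boot all_order all_algebra.
From mathcomp Require Import reals.
Import Order.TTheory GRing.Theory Num.Theory.
Local Open Scope ring_scope.

(* Player [false] = player 0 (maximizer), player [true] = player 1.
   [aoh i h]  : action-observation history of player i at history h.
   [pub h]    : public history at h.
   [time h]   : time step of h; the game stops at time [horizon].
   [trans h a h'] : probability of next history h' after action a at h. *)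
Record game (R : realType) : Type := Game {
  hist : finType;
  action : finType;
  aohT : finType;
  pubT : finType;
  player : hist -> bool;
  aoh : bool -> hist -> aohT;
  pub : hist -> pubT;
  time : hist -> nat;
  init : hist -> R;
  reward : hist -> action -> R;
  trans : hist -> action -> hist -> R;
  horizon : nat }.
Arguments hist {R} _.
Arguments action {R} _.
Arguments aohT {R} _.
Arguments pubT {R} _.
Arguments player {R} _.
Arguments aoh {R} _.
Arguments pub {R} _.
Arguments time {R} _.
Arguments init {R} _.
Arguments reward {R} _.
Arguments trans {R} _.
Arguments horizon {R} _.

Set Implicit Arguments. Unset Strict Implicit. Unset Printing Implicit Defensive.

Definition is_dist (R : realType) (T : finType) (f : T -> R) : Prop :=
  (forall x, 0 <= f x) /\ \sum_(x : T) f x = 1.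

Definition wf_game (R : realType) (G : game R) : Prop :=
  is_dist (init G) /\ (forall h, init G h != 0 -> time G h = 0%N) /\
  (forall h a, (time G h < horizon G)%N ->
     is_dist (trans G h a) /\
     forall h', trans G h a h' != 0 -> time G h' = (time G h).+1) /\
  (* perfect recall: a player's AOH determines its previous AOH and its own action *)
  (forall i h a h' g b g',
     (time G h < horizon G)%N -> (time G g < horizon G)%N ->
     trans G h a h' != 0 -> trans G g b g' != 0 ->
     aoh G i h' = aoh G i g' ->
     aoh G i h = aoh G i g /\ (player G h = i -> a = b)) /\
  (* public history extends the previous public history *)
  (forall h a h' g b g',
     (time G h < horizon G)%N -> (time G g < horizon G)%N ->
     trans G h a h' != 0 -> trans G g b g' != 0 ->
     pub G h' = pub G g' -> pub G h = pub G g) /\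
  (* public history is common knowledge *)
  (forall i h g, aoh G i h = aoh G i g -> pub G h = pub G g) /\
  (forall h g, pub G h = pub G g -> player G h = player G g /\ time G h = time G g).

Definition is_pbs (R : realType) (G : game R) (p : pubT G) (b : hist G -> R) : Prop :=
  is_dist b /\ forall h, b h != 0 -> pub G h = p.

Definition decrule (R : realType) (G : game R) := aohT G -> action G -> R.
Definition policy (R : realType) (G : game R) := (hist G -> R) -> decrule G.

Section PuBAMG.
Variables (R : realType) (G : game R).

Definition stage_reward (b : hist G -> R) (d : decrule G) : R :=
  \sum_(h : hist G) \sum_(a : action G)
     b h * d (aoh G (player G h) h) a * reward G h a.

Definition next_dist (b : hist G -> R) (d : decrule G) (h' : hist G) : R :=
  \sum_(h : hist G) \sum_(a : action G)
     b h * d (aoh G (player G h) h) a * trans G h a h'.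

Definition obs_prob (b : hist G -> R) (d : decrule G) (p' : pubT G) : R :=
  \sum_(h' : hist G | pub G h' == p') next_dist b d h'.

Definition posterior (b : hist G -> R) (d : decrule G) (p' : pubT G) : hist G -> R :=
  fun h' => if pub G h' == p' then next_dist b d h' / obs_prob b d p' else 0.

Fixpoint value (pi : policy G) (n : nat) (b : hist G -> R) : R :=
  match n with
  | 0%N => 0
  | n'.+1 => stage_reward b (pi b) +
      \sum_(p' : pubT G) obs_prob b (pi b) p' * value pi n' (posterior b (pi b) p')
  end.

Definition valid_policy (pi : policy G) : Prop :=
  forall p b, is_pbs p b -> forall h, pub G h = p ->
    is_dist (pi b (aoh G (player G h) h)).

Definition deviation (i : bool) (pi pi' : policy G) : Prop :=
  valid_policy pi' /\
  forall p b, is_pbs p b -> (forall h, pub G h = p -> player G h != i) -> pi' b = pi b.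

Definition SPE (pi : policy G) : Prop :=
  valid_policy pi /\
  forall p b, is_pbs p b -> forall h, pub G h = p ->
    (forall pi', deviation false pi pi' ->
       value pi' (horizon G - time G h) b <= value pi (horizon G - time G h) b) /\
    (forall pi', deviation true pi pi' ->
       value pi (horizon G - time G h) b <= value pi' (horizon G - time G h) b).

(* continuity of the policy as a map from PBSs (points of the simplex over
   H(h_pub), sup-metric) to public decision rules (restricted to the AOHs of
   the acting player consistent with h_pub) *)
Definition continuous_policy (pi : policy G) : Prop :=
  forall p h0 a, pub G h0 = p ->
  forall b, is_pbs p b -> forall e : R, 0 < e -> exists d : R, 0 < d /\
    forall b', is_pbs p b' -> (forall h, `|b' h - b h| < d) ->
      `|pi b' (aoh G (player G h0) h0) a - pi b (aoh G (player G h0) h0) a| < e.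

End PuBAMG.

(* Take the one-shot game in which player 0 guesses a hidden fair coin x without
   seeing it and is paid 1 for a correct guess; player 1 never moves.  A PBS at
   time 0 is a pair (b_T, b_F) on the simplex, and a decision rule q earns
   b_T q_T + b_F q_F.  Every subgame perfect equilibrium must therefore guess
   [true] with probability 1 when b_T > b_F and with probability 0 when
   b_T < b_F, so its decision rule jumps at b_T = b_F = 1/2. *)
From HB Require Import structures.
From mathcomp Require Import all_boot all_order all_algebra.
From mathcomp Require Import reals.
From mathcomp Require Import ring lra.
Import Order.TTheory GRing.Theory Num.Theory.
Set Implicit Arguments. Unset Strict Implicit. Unset Printing Implicit Defensive.
Local Open Scope ring_scope.

Lemma big_bool_pair (V : nmodType) (F : bool * bool -> V) :
  \sum_(h : bool * bool) F h =
  F (true, true) + F (true, false) + (F (false, true) + F (false, false)).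
Proof.
transitivity (\sum_(p : bool * bool | xpredT p.1 && xpredT p.2) F (p.1, p.2)).
  by apply: eq_bigr => -[].
by rewrite -(pair_big xpredT xpredT (fun i j => F (i, j))) /= !big_bool.
Qed.

Lemma convex2_le (R : realDomainType) (x y p q : R) :
  y <= x -> 0 <= q -> p + q = 1 -> x * p + y * q <= x.
Proof. by move=> *; nra. Qed.

Lemma convex2_ge_eq (R : realDomainType) (x y p q : R) :
  y < x -> 0 <= q -> p + q = 1 -> x <= x * p + y * q -> p = 1 /\ q = 0.
Proof. by move=> *; split; nra. Qed.

Section PuBAMGFacts.
Variables (R : realType) (G : game R).

Lemma value1 (pi : policy G) (b : hist G -> R) :
  value pi 1 b = stage_reward b (pi b).
Proof. by rewrite /= big1 ?addr0 // => p _; rewrite mulr0. Qed.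

Lemma is_pbs_pub (p : pubT G) (b : hist G -> R) :
  is_pbs p b -> exists h, pub G h = p.
Proof.
move=> [[_ sum_b] supp_b].
have [h bh_neq0] : exists h, b h != 0.
  apply/existsP; move: (oner_neq0 R); rewrite -sum_b.
  by apply: contraNT => /existsPn b_eq0; rewrite big1 // => h _; apply/eqP/negbNE.
by exists h; apply: supp_b.
Qed.

Definition pure_rule (c : action G) : decrule G := fun _ a => (a == c)%:R.

Lemma is_dist_pure_rule (c : action G) o : is_dist (pure_rule c o).
Proof.
split=> [a|]; first by rewrite ler0n.
by rewrite (bigD1 c) //= /pure_rule eqxx big1 ?addr0 // => a /negbTE ->.
Qed.

Lemma valid_pure_policy (c : action G) : valid_policy (fun _ => pure_rule c).
Proof. by move=> p b _ h _; apply: is_dist_pure_rule. Qed.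

End PuBAMGFacts.

Arguments pure_rule {R} G c _ _.

Section GuessingGame.
Variable R : realType.

(* A history (t, x) is at time t: for [t = false] x is the hidden coin, for
   [t = true] x is the guess just made.  Player 0 always acts, its AOH at time 0
   is [None] (the coin is unobserved), and the public history is t. *)
Definition guess_init (h : bool * bool) : R := if h.1 then 0 else 1/2.
Definition guess_reward (h : bool * bool) (a : bool) : R :=
  if h.1 then 0 else (a == h.2)%:R.
Definition guess_trans (h : bool * bool) (a : bool) (h' : bool * bool) : R :=
  (h' == (true, a))%:R.

Definition guess_game : game R :=
  @Game R (bool * bool)%type bool (option bool) bool (fun _ => false)
    (fun _ h => if h.1 then Some h.2 else None) (fun h => h.1)
    (fun h => if h.1 then 1%N else 0%N) guess_init guess_reward guess_trans 1%N.

Local Notation G := guess_game.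

Lemma wf_guess_game : wf_game G.
Proof.
split.
  split; first by case=> -[] [] /=; rewrite /guess_init /=; lra.
  by rewrite big_bool_pair /= /guess_init /=; lra.
split; first by case=> -[] [] //=; rewrite /guess_init /= eqxx.
split.
  case=> -[] x a //= _; split.
    split=> [h'|]; first by rewrite /guess_trans ler0n.
    by rewrite big_bool_pair /= /guess_trans /=; case: a => /=; lra.
  by case=> -[] y; rewrite /guess_trans /= ?xpair_eqE //= ?eqxx.
split.
  move=> i [[] x] a [[] y] [[] z] b [[] w] //= _ _;
    rewrite /guess_trans /= ?xpair_eqE /= ?eqxx //=.
  case: (y =P a) => [-> _|]; last by rewrite eqxx.
  case: (w =P b) => [-> _|]; last by rewrite eqxx.
  by case=> ->.
split; first by move=> [[] x] a [[] y] [[] z] b [[] w].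
split; first by move=> i [[] x] [[] y].
by move=> [[] x] [[] y].
Qed.

Lemma guess_stage_reward (b : hist G -> R) (d : decrule G) (c : bool) :
  stage_reward b d = b (false, c) * d None c + b (false, ~~ c) * d None (~~ c).
Proof.
rewrite /stage_reward big_bool_pair !big_bool /= /guess_reward /=.
rewrite !mulr0 !mulr1 !addr0 !add0r.
by case: c => //=; rewrite addrC.
Qed.

Lemma guess_stage_reward_pure (b : hist G -> R) (c : bool) :
  stage_reward b (pure_rule G c) = b (false, c).
Proof. by rewrite (guess_stage_reward _ _ c) /pure_rule /= eqxx; case: c => /=; lra. Qed.

Lemma guess_deviation0 (pi pi' : policy G) :
  valid_policy pi' -> deviation false pi pi'.
Proof.
split=> // p b /is_pbs_pub [h pub_h] player_neq0.
by have := player_neq0 h pub_h.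
Qed.

Lemma guess_deviation1 (pi pi' : policy G) (p : pubT G) (b : hist G -> R) :
  deviation true pi pi' -> is_pbs p b -> pi' b = pi b.
Proof. by move=> [_ eq_pi] pbs_b; apply: eq_pi pbs_b _. Qed.

Definition guess_greedy : policy G :=
  fun b => pure_rule G (b (false, false) <= b (false, true)).

Lemma guess_greedy_SPE : SPE guess_greedy.
Proof.
split=> [p b _ h _|p b pbs_b [[] x] pub_h]; first exact: is_dist_pure_rule.
  by split=> pi' _; rewrite lexx.
change (horizon G - time G (false, x))%N with 1%N.
split=> pi' dev; last by rewrite !value1 (guess_deviation1 dev pbs_b).
have [q_ge0 sum_q] := dev.1 p b pbs_b (false, x) pub_h.
rewrite big_bool /= in sum_q.
rewrite !value1 guess_stage_reward_pure.
rewrite (guess_stage_reward _ _ (b (false, false) <= b (false, true))).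
have [le_b|/ltW le_b] := leP (b (false, false)) (b (false, true));
  by apply: convex2_le; rewrite // addrC.
Qed.

Lemma guess_SPE_best_response (pi : policy G) (b : hist G -> R) (c : bool) :
  SPE pi -> is_pbs (false : pubT G) b -> b (false, ~~ c) < b (false, c) ->
  pi b None c = 1 /\ pi b None (~~ c) = 0.
Proof.
move=> [valid_pi SPE_pi] pbs_b lt_b.
have [q_ge0 sum_q] := valid_pi false b pbs_b (false, c) erefl.
have {}sum_q : pi b None c + pi b None (~~ c) = 1.
  by move: sum_q; rewrite big_bool; case: c {q_ge0 lt_b} => //=; rewrite addrC.
have [dev0 _] := SPE_pi false b pbs_b (false, c) erefl.
have := dev0 _ (guess_deviation0 pi (valid_pure_policy (c : action G))).
change (horizon G - time G (false, c))%N with 1%N.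
rewrite !value1 guess_stage_reward_pure (guess_stage_reward _ _ c).
exact: convex2_ge_eq lt_b (q_ge0 _) sum_q.
Qed.

Definition guess_pbs (e : R) : hist G -> R :=
  fun h => if h.1 then 0 else if h.2 then 1/2 + e else 1/2 - e.

Lemma is_pbs_guess_pbs (e : R) :
  `|e| <= 1/2 -> is_pbs (false : pubT G) (guess_pbs e).
Proof.
rewrite ler_norml => /andP [e_ge e_le]; split.
  split; first by case=> -[] [] /=; rewrite /guess_pbs /=; lra.
  by rewrite big_bool_pair /guess_pbs /=; lra.
by case=> -[] x //=; rewrite /guess_pbs /= eqxx.
Qed.

Lemma guess_pbs_dist (e : R) (h : hist G) :
  `|guess_pbs e h - guess_pbs 0 h| <= `|e|.
Proof.
case: h => -[] [] /=; rewrite /guess_pbs /= ?subrr ?normr0 //.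
  by have -> : 1/2 + e - (1/2 + 0) = e by ring.
have -> : 1/2 - e - (1/2 - 0) = - e by ring.
by rewrite normrN.
Qed.

Lemma guess_SPE_jump (pi : policy G) (e : R) :
  0 < e -> e <= 1/2 -> SPE pi ->
  pi (guess_pbs e) None true = 1 /\ pi (guess_pbs (- e)) None true = 0.
Proof.
move=> e_gt0 e_le SPE_pi.
have pbs_up := is_pbs_guess_pbs (e := e) ltac:(rewrite gtr0_norm //).
have pbs_down := is_pbs_guess_pbs (e := - e) ltac:(rewrite normrN gtr0_norm //).
have lt_up : guess_pbs e (false, ~~ true) < guess_pbs e (false, true).
  by rewrite /guess_pbs /=; lra.
have lt_down : guess_pbs (- e) (false, ~~ false) < guess_pbs (- e) (false, false).
  by rewrite /guess_pbs /=; lra.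
split; first exact: (guess_SPE_best_response SPE_pi pbs_up lt_up).1.
exact: (guess_SPE_best_response SPE_pi pbs_down lt_down).2.
Qed.

End GuessingGame.

Theorem propositionB8 : forall R : realType, exists G : game R,
  wf_game G /\ (exists pi : policy G, SPE pi) /\
  forall pi : policy G, SPE pi -> ~ continuous_policy pi.
Proof.
move=> R; exists (guess_game R); split; first exact: wf_guess_game.
split; first by exists (@guess_greedy R); apply: guess_greedy_SPE.
move=> pi SPE_pi cont_pi.
have pbs0 := is_pbs_guess_pbs (e := 0 : R) ltac:(rewrite normr0; lra).
have [d [d_gt0 close_d]] :=
  cont_pi false (false, true) true erefl _ pbs0 (1/2) ltac:(lra).
have [e [e_gt0 e_lt_d e_le]] : exists e : R, [/\ 0 < e, e < d & e <= 1/2].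
  by case: (lerP d 1) => d_le; [exists (d/2) | exists (1/2)]; split; lra.
have near0 (s : R) : `|s| = e ->
    `|pi (guess_pbs s) None true - pi (guess_pbs 0) None true| < 1/2.
  move=> abs_s; apply: close_d; first by apply: is_pbs_guess_pbs; lra.
  by move=> h; apply: le_lt_trans (guess_pbs_dist s h) _; rewrite abs_s.
have [jump_up jump_down] := guess_SPE_jump e_gt0 e_le SPE_pi.
have := near0 e (gtr0_norm e_gt0).
have := near0 (- e) ltac:(rewrite normrN gtr0_norm //).
rewrite jump_up jump_down !ltr_norml; lra.
Qed.
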